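(* Let $(X_1,\xi_1),(X_2,\xi_2)$ be marked Dynkin diagrams and $\Delta_i=\Delta_{X_i}$. Then for all $k\ge1$, $$\det Z_k=(k-1)\Delta_1\Delta_2+\big(\det X_1\,\Delta_2+\det X_2\,\Delta_1\big).$$
   Context: A marked Dynkin diagram $(X,\xi)$ is the Dynkin diagram of a symmetrizable generalized Cartan matrix $C(X)$ together with a distinguished node $\xi$; $\det X:=\det C(X)$. $X(-1)$ denotes the diagram obtained from $X$ by deleting $\xi$ and all edges incident to it (with the convention $\det$ of the empty diagram is $1$), and $\Delta_X:=\det X-\det X(-1)$. For $k\ge1$, $Z_k=Z_k(X_1,X_2)$ is the Dynkin diagram obtained from the disjoint union of $X_1$, a path $A_k$ with nodes $1,\dots,k$ (consecutive nodes joined by simple edges) and $X_2$, by adding a simple edge between $\xi_1$ and node $1$ and one between node $k$ and $\xi_2$ (simple edge: Cartan entries $-1,-1$). *)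

From HB Require Import structures.
From mathcomp Require Import all_boot all_order all_algebra.
Set Implicit Arguments. Unset Strict Implicit. Unset Printing Implicit Defensive.
Import Order.TTheory GRing.Theory Num.Theory.
Local Open Scope ring_scope.

(* A Dynkin diagram is represented by its (integer) generalized Cartan matrix. *)
Definition is_gcm (n : nat) (A : 'M[int]_n) : Prop :=
  (forall i, A i i = 2) /\
  (forall i j, i != j -> A i j <= 0) /\
  (forall i j, (A i j == 0) = (A j i == 0)).

Definition symmetrizable (n : nat) (A : 'M[int]_n) : Prop :=
  exists d : 'I_n -> rat, (forall i, 0 < d i) /\
    (forall i j, d i * (A i j)%:~R = d j * (A j i)%:~R).

Definition symmetrizable_gcm (n : nat) (A : 'M[int]_n) : Prop :=
  is_gcm A /\ symmetrizable A.

Definition delete_node (n : nat) (X : 'M[int]_n.+1) (xi : 'I_n.+1) : 'M[int]_n :=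
  row' xi (col' xi X).

(* Delta_X = det X - det X(-1)  (det of the empty 0x0 matrix is 1) *)
Definition Delta (n : nat) (X : 'M[int]_n.+1) (xi : 'I_n.+1) : int :=
  \det X - \det (delete_node X xi).

(* Entries of the Cartan matrix of Z_k(X1,X2): nodes 0..n1 are X1,
   nodes n1+1 .. n1+k are the path A_k (path node m is n1+m),
   nodes n1+k+1 .. are X2. *)
Definition Zentry (n1 n2 : nat) (X1 : 'M[int]_n1.+1) (x1 : 'I_n1.+1)
    (X2 : 'M[int]_n2.+1) (x2 : 'I_n2.+1) (k : nat) (i j : nat) : int :=
  let a := n1.+1 in let b := (a + k)%N in
  if (i < a)%N && (j < a)%N then X1 (inord i) (inord j)
  else if (b <= i)%N && (b <= j)%N then X2 (inord (i - b)) (inord (j - b))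
  else if [&& (a <= i)%N, (i < b)%N, (a <= j)%N & (j < b)%N] then
    (if i == j then 2 else if (i == j.+1) || (j == i.+1) then -1 else 0)
  else if ((i == x1 :> nat) && (j == a)) || ((j == x1 :> nat) && (i == a)) then -1
  else if ((i == b.-1) && (j == b + x2)%N) || ((j == b.-1) && (i == b + x2)%N) then -1
  else 0.

Definition Zmx (n1 n2 : nat) (X1 : 'M[int]_n1.+1) (x1 : 'I_n1.+1)
    (X2 : 'M[int]_n2.+1) (x2 : 'I_n2.+1) (k : nat) : 'M[int]_(n1.+1 + k + n2.+1) :=
  \matrix_(i, j) Zentry X1 x1 X2 x2 k i j.

(* Write X -- Y for marked diagrams X, Y joined by a simple edge between their
   marked nodes.  Expanding the determinant along the two entries of that edge gives
     det (X -- Y) = det X det Y - det X(-1) det Y(-1).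
   Let Y_k be the path A_k followed by X2, marked at its first node (Y_0 = X2).
   Then Y_(k+1) = A_1 -- Y_k and Y_(k+1)(-1) = Y_k, so
   det Y_(k+1) = 2 det Y_k - det Y_(k-1) with det Y_(-1) := det X2(-1), whence
   det Y_k = det X2 + k Delta2.  Finally Z_k = X1 -- Y_k for k >= 1. *)

From HB Require Import structures.
From mathcomp Require Import all_boot all_order all_algebra.
From mathcomp Require Import zify ring.
Import Order.TTheory GRing.Theory Num.Theory.
Set Implicit Arguments. Unset Strict Implicit. Unset Printing Implicit Defensive.
Local Open Scope ring_scope.

Ltac first_atom c := lazymatch c with
  | ?x && _ => first_atom x | ?x || _ => first_atom x | ~~ ?x => first_atom x | _ => c end.

Ltac case_ifs := repeat match goal with |- context [if ?c then _ else _] =>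
  let a := first_atom c in let E := fresh in
  case E : a; cbn [andb orb negb]; try (exfalso; lia) end.

Section ArrayDeterminants.
Variable R : comPzRingType.
Implicit Types (f g : nat -> nat -> R) (m n p q r c u v : nat).

(* Square arrays are indexed by nat so that their index arithmetic can be left to lia. *)
Definition detf n f : R := \det (\matrix_(i < n, j < n) f i j).
Definition minorf r c f i j := f (bump r i) (bump c j).
Definition shiftf m f i j := f (m + i)%N (m + j)%N.

Lemma eq_detf n f g :
  (forall i j, (i < n)%N -> (j < n)%N -> f i j = g i j) -> detf n f = detf n g.
Proof. by move=> efg; congr (\det _); apply/matrixP => i j; rewrite !mxE efg. Qed.

Lemma detf0 f : detf 0 f = 1.
Proof. exact: det_mx00. Qed.

Lemma detf1 f : detf 1 f = f 0%N 0%N.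
Proof. by rewrite /detf det_mx11 mxE. Qed.

Lemma expand_detf_row n f r : (r < n.+1)%N ->
  detf n.+1 f = \sum_(j < n.+1) f r j * ((-1) ^+ (r + j) * detf n (minorf r j f)).
Proof.
move=> ltrn; rewrite /detf (expand_det_row _ (Ordinal ltrn)).
apply: eq_bigr => j _; rewrite mxE /cofactor; congr (_ * (_ * \det _)).
by apply/matrixP => i k; rewrite !mxE.
Qed.

Lemma detf_row0 n f r : (r < n)%N -> (forall j, (j < n)%N -> f r j = 0) -> detf n f = 0.
Proof.
case: n => [//|n] ltrn fr0; rewrite (expand_detf_row f ltrn) big1 // => j _.
by rewrite fr0 ?mul0r.
Qed.

Lemma detf_change_entry n f g r c : (r < n.+1)%N -> (c < n.+1)%N ->
  (forall i j, (i < n.+1)%N -> (j < n.+1)%N -> (i != r) || (j != c) -> f i j = g i j) ->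
  detf n.+1 f = detf n.+1 g + (f r c - g r c) * ((-1) ^+ (r + c) * detf n (minorf r c g)).
Proof.
move=> ltrn ltcn efg; rewrite !(expand_detf_row _ ltrn).
have eq_minor j : (j < n.+1)%N -> detf n (minorf r j f) = detf n (minorf r j g).
  move=> ltjn; apply: eq_detf => i k lti ltk.
  by rewrite /minorf efg ?neq_bump // /bump; lia.
rewrite (bigD1 (Ordinal ltcn)) //= [in RHS](bigD1 (Ordinal ltcn)) //= eq_minor //.
rewrite (eq_bigr (fun j : 'I_n.+1 => g r j * ((-1) ^+ (r + j) * detf n (minorf r j g)))).
  by ring.
move=> j neq_jc; rewrite eq_minor // efg //; apply/orP; right.
by apply: contra neq_jc => /eqP ejc; apply/eqP/val_inj.
Qed.

Lemma detf_lblock m n f :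
  (forall i j, (i < m)%N -> (m <= j < m + n)%N -> f i j = 0) ->
  detf (m + n) f = detf m f * detf n (shiftf m f).
Proof.
move=> f0; rewrite /detf -[X in \det X]submxK.
have -> : ursubmx (\matrix_(i < m + n, j < m + n) f i j) = 0 :> 'M_(m, n).
  by apply/matrixP => i j; rewrite !mxE f0 //= leq_addr ltn_add2l ltn_ord.
by rewrite (@det_lblock R); congr (_ * _); congr (\det _); apply/matrixP => i j; rewrite !mxE.
Qed.

Lemma detf_ublock m n f :
  (forall i j, (m <= i < m + n)%N -> (j < m)%N -> f i j = 0) ->
  detf (m + n) f = detf m f * detf n (shiftf m f).
Proof.
move=> f0; rewrite /detf -[X in \det X]submxK.
have -> : dlsubmx (\matrix_(i < m + n, j < m + n) f i j) = 0 :> 'M_(n, m).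
  by apply/matrixP => i j; rewrite !mxE f0 //= leq_addr ltn_add2l ltn_ord.
by rewrite (@det_ublock R); congr (_ * _); congr (\det _); apply/matrixP => i j; rewrite !mxE.
Qed.

Definition glue p f g u v (i j : nat) : R :=
  if (i < p)%N && (j < p)%N then f i j
  else if (p <= i)%N && (p <= j)%N then g (i - p)%N (j - p)%N
  else if ((i == u) && (j == p + v)%N) || ((i == p + v)%N && (j == u)) then -1
  else 0.

Ltac index_cases :=
  rewrite /glue /minorf /shiftf /bump /=; case_ifs; try lia; try (apply: f_equal2; lia).

Lemma detf_glue p q f g u v : (u < p.+1)%N -> (v < q.+1)%N ->
  detf (p.+1 + q.+1) (glue p.+1 f g u v) =
  detf p.+1 f * detf q.+1 g - detf p (minorf u u f) * detf q (minorf v v g).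
Proof.
move=> ltup ltvq; set h := glue p.+1 f g u v.
(* Clear the edge entry (u, p.+1 + v) of h, then the other edge entry, which sits
   at (p + v, u) in the minor W; everything left is block triangular. *)
pose h0 i j := if (i == u) && (j == p.+1 + v)%N then 0 else h i j.
pose W := minorf u (p.+1 + v) h0.
pose W0 i j := if (i == p + v)%N && (j == u) then 0 else W i j.
have h_split : detf (p.+1 + q.+1) h =
    detf (p.+1 + q.+1) h0 - (-1) ^+ (u + (p.+1 + v)) * detf (p + q.+1) W.
  rewrite addSn (detf_change_entry (g := h0) (r := u) (c := (p.+1 + v)%N)); try lia.
    by rewrite /h0 !eqxx /h; index_cases; rewrite subr0 mulN1r.
  by move=> i j _ _; rewrite /h0; case: ifP => //; lia.
have h0_block : detf (p.+1 + q.+1) h0 = detf p.+1 f * detf q.+1 g.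
  rewrite detf_lblock; last first.
    by move=> i j lti /andP[lej ltj]; rewrite /h0 /h; index_cases.
  by congr (_ * _); apply: eq_detf => i j lti ltj; rewrite /h0 /h; index_cases.
have W_split : detf (p + q.+1) W =
    detf (p + q.+1) W0 - (-1) ^+ (p + v + u) * detf (p + q) (minorf (p + v) u W0).
  rewrite addnS (detf_change_entry (g := W0) (r := (p + v)%N) (c := u)); try lia.
    by rewrite /W0 !eqxx /W /h0 /h; index_cases; rewrite subr0 mulN1r.
  by move=> i j _ _; rewrite /W0; case: ifP => //; lia.
(* Row p of W0 (row p.+1 of h) vanishes on the first p.+1 columns. *)
have W0_singular : detf (p + q.+1) W0 = 0.
  rewrite -addSnnS detf_ublock => [|i j /andP[lei lti] ltj]; last first.
    by rewrite /W0 /W /h0 /h; index_cases.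
  rewrite (@detf_row0 _ _ p) ?mul0r // => j ltj.
  by rewrite /W0 /W /h0 /h; index_cases.
have minor_block : detf (p + q) (minorf (p + v) u W0) =
    detf p (minorf u u f) * detf q (minorf v v g).
  rewrite detf_lblock => [|i j lti /andP[lej ltj]]; last first.
    by rewrite /W0 /W /h0 /h; index_cases.
  by congr (_ * _); apply: eq_detf => i j lti ltj; rewrite /W0 /W /h0 /h; index_cases.
rewrite h_split h0_block W_split W0_singular minor_block sub0r mulrN opprK mulrA -exprD.
have -> : (u + (p.+1 + v) + (p + v + u) = (2 * (u + v + p)).+1)%N by lia.
by rewrite -signr_odd oddS oddM /= expr1 mulN1r.
Qed.

Lemma detf_glue1 q f g v : (v < q.+1)%N ->
  detf (1 + q.+1) (glue 1 f g 0 v) = f 0%N 0%N * detf q.+1 g - detf q (minorf v v g).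
Proof. by move=> ltvq; rewrite detf_glue // detf1 detf0 mul1r. Qed.

Lemma glue1_succ f g u v i j : glue 1 f g u v i.+1 j.+1 = g i j.
Proof. by rewrite /glue /= !subn1. Qed.

Definition mx_array n (X : 'M[R]_n.+1) i j := X (inord i) (inord j).

Lemma detf_mx_array n (X : 'M[R]_n.+1) : detf n.+1 (mx_array X) = \det X.
Proof. by congr (\det _); apply/matrixP => i j; rewrite mxE /mx_array !inord_val. Qed.

Lemma detf_minor_mx_array n (X : 'M[R]_n.+1) (x : 'I_n.+1) :
  detf n (minorf x x (mx_array X)) = \det (row' x (col' x X)).
Proof.
congr (\det _); apply/matrixP => i j; rewrite !mxE /minorf /mx_array.
by congr (X _ _); apply: val_inj; rewrite /= inordK //; exact: ltn_ord (lift x _).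
Qed.

End ArrayDeterminants.

Section PathExtension.
Variables (n1 n2 : nat) (X1 : 'M[int]_n1.+1) (x1 : 'I_n1.+1).
Variables (X2 : 'M[int]_n2.+1) (x2 : 'I_n2.+1).

(* The diagram Y_k, i.e. Z_k with X1 removed; [tail_mark k] is its marked node. *)
Definition tail k := shiftf n1.+1 (Zentry X1 x1 X2 x2 k).

Definition tail_mark k : nat := if k is 0 then x2 else 0.

Ltac Zentry_cases :=
  rewrite /tail /shiftf /glue /mx_array /Zentry;
  move: (ltn_ord x1) (ltn_ord x2) => ? ?;
  case_ifs; try lia; try (congr (_ (inord _) (inord _)); lia).

Lemma Zentry_glue k i j : (0 < k)%N ->
  Zentry X1 x1 X2 x2 k i j = glue n1.+1 (mx_array X1) (tail k) x1 0 i j.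
Proof.
move=> k_gt0; rewrite /glue addn0.
case: (ltnP i n1.+1) => [lti|lei]; case: (ltnP j n1.+1) => [ltj|lej] /=.
- by rewrite /Zentry lti ltj.
- by Zentry_cases.
- by Zentry_cases.
- by rewrite /tail /shiftf !subnKC.
Qed.

Lemma tail0 i j : tail 0 i j = mx_array X2 i j.
Proof. Zentry_cases. Qed.

Lemma tail_succ k i j : tail k.+1 i j = glue 1 (fun _ _ => 2) (tail k) 0 (tail_mark k) i j.
Proof.
case: i j => [|i] [|j]; rewrite ?glue1_succ; case: k => [|k]; rewrite /tail_mark.
all: Zentry_cases.
Qed.

Lemma detf_tail0 : detf n2.+1 (tail 0) = \det X2.
Proof. by rewrite -detf_mx_array; apply: eq_detf => i j _ _; apply: tail0. Qed.

Lemma detf_tail0_minor : detf n2 (minorf x2 x2 (tail 0)) = \det (delete_node X2 x2).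
Proof. by rewrite -detf_minor_mx_array; apply: eq_detf => i j _ _; apply: tail0. Qed.

Lemma detf_tail_succ k :
  detf (k.+1 + n2.+1) (tail k.+1) =
  2 * detf (k + n2.+1) (tail k) - detf (k + n2) (minorf (tail_mark k) (tail_mark k) (tail k)).
Proof.
have lt_end : (tail_mark k < (k + n2).+1)%N by case: k => [|k]; rewrite //= ltn_ord.
rewrite addnS (eq_detf (g := glue 1 (fun _ _ => 2) (tail k) 0 (tail_mark k))) => [|i j _ _].
  by rewrite detf_glue1 // addnS.
exact: tail_succ.
Qed.

Lemma detf_tail_minor_succ k :
  detf (k.+1 + n2) (minorf 0 0 (tail k.+1)) = detf (k + n2.+1) (tail k).
Proof.
by rewrite addSnnS; apply: eq_detf => i j _ _; rewrite /minorf /= tail_succ glue1_succ.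
Qed.

Lemma detf_tail k :
  detf (k + n2.+1) (tail k) = \det X2 + k%:Z * Delta X2 x2 /\
  detf (k + n2) (minorf (tail_mark k) (tail_mark k) (tail k)) =
    \det X2 + (k%:Z - 1) * Delta X2 x2.
Proof.
elim: k => [|k [IHdet IHminor]].
  by rewrite detf_tail0 detf_tail0_minor /Delta; split; ring.
by rewrite detf_tail_succ detf_tail_minor_succ IHdet IHminor intS; split; ring.
Qed.

Lemma det_Zmx k : (0 < k)%N ->
  \det (Zmx X1 x1 X2 x2 k) =
  \det X1 * detf (k + n2.+1) (tail k)
  - \det (delete_node X1 x1) * detf (k + n2) (minorf 0 0 (tail k)).
Proof.
move=> k_gt0.
have -> : \det (Zmx X1 x1 X2 x2 k) = detf (n1.+1 + (k + n2).+1) (Zentry X1 x1 X2 x2 k).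
  by rewrite -addnS addnA.
rewrite (eq_detf (g := glue n1.+1 (mx_array X1) (tail k) x1 0)) => [|i j _ _].
  by rewrite detf_glue // detf_mx_array detf_minor_mx_array addnS.
exact: Zentry_glue.
Qed.

End PathExtension.

Theorem lemma3p5 (n1 n2 : nat) (X1 : 'M[int]_n1.+1) (x1 : 'I_n1.+1)
    (X2 : 'M[int]_n2.+1) (x2 : 'I_n2.+1) (k : nat) :
  symmetrizable_gcm X1 -> symmetrizable_gcm X2 -> (1 <= k)%N ->
  \det (Zmx X1 x1 X2 x2 k) =
    (k%:Z - 1) * Delta X1 x1 * Delta X2 x2
    + (\det X1 * Delta X2 x2 + \det X2 * Delta X1 x1).
Proof.
move=> _ _; case: k => [//|k] _.
have [det_tail det_tail_minor] := detf_tail X1 x1 X2 x2 k.+1.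
by rewrite det_Zmx // det_tail det_tail_minor /Delta; ring.
Qed.
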